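(* Let $K$ be a positive semiring and let $R$ and $S$ be $K$-relations over finite sets of attributes $X$ and $Y$. The following are equivalent: (a) $R$ and $S$ are consistent; (b) $R[X\cap Y]\equiv S[X\cap Y]$; (c) the ordinary relations $R'$ and $S'$ are consistent (i.e., $R'[X\cap Y]=S'[X\cap Y]$, where $P[W]=\{t[W]:t\in P\}$) and $R\Join S\equiv S\Join R$; (d) $R\equiv (R\Join S)[X]$ and $S\equiv (R\Join S)[Y]$.
   Context: A commutative semiring $(K,+,\cdot,0,1)$ with $0\neq 1$ is positive if $a+b=0$ implies $a=b=0$, and $ab=0$ implies $a=0$ or $b=0$. Each attribute $A$ has a domain $\mathrm{Dom}(A)$. For a finite set of attributes $X$, $\mathrm{Tup}(X)$ is the set of maps assigning to each $A\in X$ an element of $\mathrm{Dom}(A)$; for $Y\subseteq X$, $t[Y]$ is the restriction of $t$ to $Y$; $XY$ denotes $X\cup Y$. A $K$-relation over $X$ is a map $R:\mathrm{Tup}(X)\to K$ with finite support $R'=\{t: R(t)\neq 0\}$. For $Y\subseteq X$, the marginal $R[Y]$ is the $K$-relation over $Y$ with $R[Y](u)=\sum_{r\in R',\, r[Y]=u} R(r)$. For $a\in K$, $aR$ is $t\mapsto aR(t)$. $R\equiv S$ (same attribute set) means $aR=bS$ for some nonzero $a,b\in K$. $K$-relations $R$ over $X$ and $S$ over $Y$ are consistent if there is a $K$-relation $T$ over $XY$ with $R\equiv T[X]$ and $S\equiv T[Y]$. For a $K$-relation $T$ over $Y$, $Z\subseteq Y$ and $u\in\mathrm{Tup}(Z)$,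 set $c_T(u)=\prod_{v\in T[Z]',\, v\neq u}T[Z](v)$ (empty product equals $1$). The join of $R$ over $X$ and $S$ over $Y$ is the $K$-relation over $XY$ defined by $(R\Join S)(t)=R(t[X])\,S(t[Y])\,c_S(t[X\cap Y])$, with $Z=X\cap Y$. *)

From HB Require Import structures.
From mathcomp Require Import all_boot all_order all_algebra.
From mathcomp Require Import finmap.
Set Implicit Arguments.
Unset Strict Implicit.
Unset Printing Implicit Defensive.
Import GRing.Theory.
Local Open Scope fset_scope.
Local Open Scope fmap_scope.
Local Open Scope ring_scope.

(* Positive commutative semiring (0 <> 1 is built into comNzSemiRingType). *)
Definition positive_semiring (K : comNzSemiRingType) : Prop :=
  (forall a b : K, a + b = 0 -> a = 0 /\ b = 0) /\
  (forall a b : K, a * b = 0 -> a = 0 \/ b = 0).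

Section KRel.
Variables (K : comNzSemiRingType) (Att V : choiceType).

Definition tuple := {fmap Att -> V}.

Definition is_tuple (Dom : Att -> V -> Prop) (X : {fset Att}) (t : tuple) : Prop :=
  domf t = X /\ (forall a v, t.[? a] = Some v -> Dom a v).

Definition krel := {fsfun tuple -> K with 0}.

Definition is_krel (Dom : Att -> V -> Prop) (X : {fset Att}) (R : krel) : Prop :=
  forall t, R t != 0 -> is_tuple Dom X t.

Definition restr (t : tuple) (Y : {fset Att}) : tuple := t.[& Y].

Definition proj (P : {fset tuple}) (W : {fset Att}) : {fset tuple} :=
  [fset restr t W | t in P].

Definition marginal (R : krel) (Y : {fset Att}) : krel :=
  [fsfun u in proj (finsupp R) Y =>
     \sum_(r <- finsupp R | restr r Y == u) R r | 0].

Definition krel_equiv (R S : krel) : Prop :=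
  exists a b : K, [/\ a != 0, b != 0 & forall t, a * R t = b * S t].

Definition consistent (Dom : Att -> V -> Prop) (X Y : {fset Att}) (R S : krel) : Prop :=
  exists T : krel, [/\ is_krel Dom (X `|` Y) T,
                      krel_equiv R (marginal T X) & krel_equiv S (marginal T Y)].

Definition cfactor (T : krel) (Z : {fset Att}) (u : tuple) : K :=
  \prod_(v <- finsupp (marginal T Z) | v != u) marginal T Z v.

(* join R |><| S (R over X, S over Y); its support consists of tuples
   t over XY with t[X] in R', t[Y] in S', all of which are unions r + s. *)
Definition join (X Y : {fset Att}) (R S : krel) : krel :=
  [fsfun t in [fset (catf r s : tuple) | r : tuple in finsupp R, s : tuple in finsupp S] =>
     R (restr t X) * S (restr t Y) * cfactor S (X `&` Y) (restr t (X `&` Y)) | 0].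

End KRel.

(* Positivity makes equivalence of K-relations transitive and support
   preserving, and marginals are compatible with it and compose; this gives
   (a) -> (b).  For (b) -> (c), the correction
   factors c_R and c_S are products of the Z-marginal values with one factor
   omitted, so a R[Z] = b S[Z] makes them proportional.  For (c) -> (d), the
   X-marginal of R |><| S is R scaled by the product of all nonzero values
   of S[Z] (marginal_join), and the Y-part follows by symmetry.  Finally
   (d) -> (a) is witnessed by T = R |><| S. *)

From Pilot Require Import Defs.
From HB Require Import structures.
From mathcomp Require Import all_boot all_order all_algebra.
From mathcomp Require Import finmap.
Set Implicit Arguments.
Unset Strict Implicit.
Unset Printing Implicit Defensive.
Import GRing.Theory.
Local Open Scope fset_scope.
Local Open Scope fmap_scope.

Section Tuples.
Variables (Att V : choiceType).
Implicit Types (t r s : Defs.tuple Att V) (A B X Y : {fset Att}).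

Lemma restr_sub t A B : B `<=` A -> restr (restr t A) B = restr t B.
Proof. by move=> BA; rewrite /restr restrictf_comp; congr restrictf; apply/fsetIidPr. Qed.

Lemma restr_catf r s X Y : domf r = X -> domf s = Y ->
  restr r (X `&` Y) = restr s (X `&` Y) ->
  restr (catf r s) X = r /\ restr (catf r s) Y = s.
Proof.
move=> dr ds e; split; last by rewrite /restr -ds restrictf_cat_domr.
apply/fmapP=> k; rewrite fnd_restrict fnd_cat.
case: ifPn => kX; last by rewrite not_fnd //; apply: contra kX; rewrite -dr.
case: ifPn => // kY; rewrite ds in kY.
have := congr1 (fun f : Defs.tuple Att V => f.[? k]) e.
by rewrite /= !fnd_restrict in_fsetI kX kY.
Qed.

Lemma catf_restr t X Y : domf t `<=` X `|` Y ->
  catf (restr t X) (restr t Y) = t.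
Proof.
move=> sub; apply/fmapP=> k; rewrite fnd_cat !fnd_restrict /restr domf_restrict in_fsetI.
case kY: (k \in Y) => /=.
  by case kt: (k \in domf t) => //=; case: ifP => // _; rewrite not_fnd // kt.
case: ifPn => // kX; rewrite not_fnd //; apply/negP => /(fsubsetP sub).
by rewrite in_fsetU (negPf kX) kY.
Qed.

End Tuples.

Local Open Scope ring_scope.

Section PositiveSemiring.
Variables (K : comNzSemiRingType) (HK : positive_semiring K).

Lemma pmulf_neq0 (a b : K) : a != 0 -> b != 0 -> a * b != 0.
Proof. by move=> a0 b0; apply/eqP => /(proj2 HK) [] /eqP; apply/negP. Qed.

Lemma pexpf_neq0 (a : K) n : a != 0 -> a ^+ n != 0.
Proof. by move=> a0; elim: n => [|n IH]; rewrite ?oner_neq0 // exprS pmulf_neq0. Qed.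

Lemma pprod_neq0 (I : eqType) (s : seq I) (P : pred I) (F : I -> K) :
  (forall i, i \in s -> F i != 0) -> \prod_(i <- s | P i) F i != 0.
Proof.
move=> nz; rewrite big_seq_cond; apply: (big_ind (fun x => x != 0)).
- exact: oner_neq0.
- exact: pmulf_neq0.
- by move=> i /andP[/nz].
Qed.

Lemma psum_eq0 (I : eqType) (s : seq I) (P : pred I) (F : I -> K) :
  \sum_(i <- s | P i) F i = 0 -> forall i, i \in s -> P i -> F i = 0.
Proof.
elim: s => [|x s IH] //=; rewrite big_cons; case: ifP => Px.
  move=> /(proj1 HK) [h1 h2] i; rewrite in_cons => /orP[/eqP -> //|]; exact: IH.
by move=> h i; rewrite in_cons => /orP[/eqP ->|]; [rewrite Px | exact: IH].
Qed.

End PositiveSemiring.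

Section Marginals.
Variables (K : comNzSemiRingType) (HK : positive_semiring K) (Att V : choiceType).
Local Notation tup := (Defs.tuple Att V).
Local Notation kr := (krel K Att V).
Implicit Types (R S T : kr) (X Y Z : {fset Att}).

Lemma krel_equiv_sym R S : krel_equiv R S -> krel_equiv S R.
Proof. by case=> a [b [a0 b0 e]]; exists b, a; split. Qed.

Lemma krel_equiv_trans R S T :
  krel_equiv R S -> krel_equiv S T -> krel_equiv R T.
Proof.
case=> a [b [a0 b0 eRS]] [c [d [c0 d0 eST]]].
exists (c * a), (b * d); split; try exact: pmulf_neq0.
by move=> t; rewrite -!mulrA eRS mulrCA eST mulrCA.
Qed.

Lemma krel_equiv_finsupp R S : krel_equiv R S -> finsupp R = finsupp S.
Proof.
case=> a [b [a0 b0 e]]; apply/fsetP => t; rewrite !mem_finsupp.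
apply/idP/idP; apply: contra => /eqP t0; apply/eqP.
- have : a * R t = 0 by rewrite e t0 mulr0.
  by case/(proj2 HK) => // /eqP; rewrite (negPf a0).
- have : b * S t = 0 by rewrite -e t0 mulr0.
  by case/(proj2 HK) => // /eqP; rewrite (negPf b0).
Qed.

Lemma marginalE R Z u :
  marginal R Z u = \sum_(r <- finsupp R | restr r Z == u) R r.
Proof.
rewrite /marginal fsfunE; case: ifPn => // uN; apply/esym/big1_seq => r /andP[/eqP ru rin].
by case/negP: uN; apply/imfsetP; exists r.
Qed.

Lemma finsupp_marginal R Z : finsupp (marginal R Z) = proj (finsupp R) Z.
Proof.
apply/fsetP => u; rewrite mem_finsupp marginalE; apply/idP/idP.
  apply: contraR => uN; apply/eqP/big1_seq => r /andP[/eqP ru rin].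
  by case/negP: uN; apply/imfsetP; exists r.
case/imfsetP => r rin ->; apply/eqP => /(psum_eq0 HK) r0.
by move: (rin); rewrite mem_finsupp (r0 r rin (eqxx _)) eqxx.
Qed.

Lemma krel_equiv_marginal R S Z :
  krel_equiv R S -> krel_equiv (marginal R Z) (marginal S Z).
Proof.
move=> eqv; have sRS := krel_equiv_finsupp eqv.
case: eqv => a [b [a0 b0 e]]; exists a, b; split => // u.
by rewrite !marginalE sRS !mulr_sumr; apply: eq_bigr => r _; rewrite e.
Qed.

Lemma marginal_marginal T X Z : Z `<=` X ->
  marginal (marginal T X) Z = marginal T Z.
Proof.
move=> ZX; apply/fsfunP => u; rewrite marginalE finsupp_marginal.
under eq_bigr do rewrite marginalE big_mkcond.
rewrite exchange_big /= [RHS]marginalE [RHS]big_mkcond /=.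
apply: eq_big_seq => r rin; rewrite big_mkcond /= (bigD1_seq (restr r X)) ?fset_uniq //=.
- rewrite eqxx restr_sub // big1_seq ?addr0 // => w /andP[wr _].
  by rewrite [restr r X == w]eq_sym (negPf wr); case: ifP.
- by apply/imfsetP; exists r.
Qed.

Lemma sum_finsupp_map R (I : eqType) (s : seq I) (g : I -> tup) (P : pred tup) :
  uniq s -> {in s &, injective g} -> {subset finsupp R <= map g s} ->
  \sum_(t <- finsupp R | P t) R t = \sum_(i <- s | P (g i)) R (g i).
Proof.
move=> us ginj sub; rewrite -(big_map g) [RHS](bigID (mem (finsupp R))) /=.
rewrite [X in _ = _ + X]big1 ?addr0; last by move=> t /andP[_ /fsfun_dflt].
under [RHS]eq_bigl => t do rewrite andbC.
rewrite -big_filter_cond; apply: perm_big; apply: uniq_perm.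
- exact: fset_uniq.
- by rewrite filter_uniq // map_inj_in_uniq.
- by move=> t; rewrite mem_filter; case: (boolP (t \in _)) => // /sub.
Qed.

End Marginals.

Lemma prod_scale_but_one (K : comNzSemiRingType) (I : eqType) (s : seq I) u
  (a b : K) (F G : I -> K) : uniq s -> u \in s -> (forall v, a * F v = b * G v) ->
  a ^+ (size s).-1 * \prod_(v <- s | v != u) F v =
  b ^+ (size s).-1 * \prod_(v <- s | v != u) G v.
Proof.
move=> us us_u e.
have -> : (size s).-1 = count (predC (pred1 u)) s.
  by rewrite -(count_predC (pred1 u)) count_uniq_mem // us_u.
rewrite -!iter_mulr_1 -!big_const_seq -!big_split /=.
by apply: eq_bigr => v _; rewrite e.
Qed.

Section Join.
Variables (K : comNzSemiRingType) (Att V : choiceType).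
Local Notation tup := (Defs.tuple Att V).
Local Notation kr := (krel K Att V).
Variables (Dom : Att -> V -> Prop) (X Y : {fset Att}) (R S : kr).
Hypotheses (HR : is_krel Dom X R) (HS : is_krel Dom Y S).
Local Notation Z := (X `&` Y).
Local Notation J := (join X Y R S).

Lemma domf_suppR r : r \in finsupp R -> domf r = X.
Proof. by rewrite mem_finsupp => /HR []. Qed.

Lemma domf_suppS s : s \in finsupp S -> domf s = Y.
Proof. by rewrite mem_finsupp => /HS []. Qed.

(* The join is given by its defining formula on every tuple over X `|` Y:
   outside the set of joins of supported tuples one of the factors vanishes. *)
Lemma joinE t : J t =
  if domf t == X `|` Y then R (restr t X) * S (restr t Y) * cfactor S Z (restr t Z)
  else 0.
Proof.
rewrite /join fsfunE; case: ifPn => [/imfset2P [r rin [s sin ->]] | tN].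
  by rewrite domf_cat (domf_suppR rin) (domf_suppS sin) eqxx.
case: eqP => // dt.
have [tXR|/fsfun_dflt->] := boolP (restr t X \in finsupp R); last by rewrite !mul0r.
have [tYS|/fsfun_dflt->] := boolP (restr t Y \in finsupp S); last by rewrite mulr0 mul0r.
case/negP: tN; apply/imfset2P; exists (restr t X) => //; exists (restr t Y) => //.
by rewrite catf_restr // dt.
Qed.

Lemma join_catf r s : r \in finsupp R -> s \in finsupp S ->
  restr r Z = restr s Z -> J (catf r s) = R r * S s * cfactor S Z (restr r Z).
Proof.
move=> rin sin e; have [rX sY] := restr_catf (domf_suppR rin) (domf_suppS sin) e.
rewrite joinE domf_cat (domf_suppR rin) (domf_suppS sin) eqxx rX sY.
by rewrite -(restr_sub (catf r s) (fsubsetIl X Y)) rX.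
Qed.

Lemma join_supp t : J t != 0 ->
  [/\ restr t X \in finsupp R, restr t Y \in finsupp S,
      restr (restr t X) Z = restr (restr t Y) Z & catf (restr t X) (restr t Y) = t].
Proof.
rewrite joinE; case: (domf t =P X `|` Y) => [dt nz|_]; last by rewrite eqxx.
split; rewrite ?mem_finsupp.
- by apply: contra nz => /eqP->; rewrite !mul0r.
- by apply: contra nz => /eqP->; rewrite mulr0 mul0r.
- by rewrite !restr_sub ?fsubsetIl ?fsubsetIr.
- by rewrite catf_restr // dt.
Qed.

Lemma is_krel_join : is_krel Dom (X `|` Y) J.
Proof.
move=> t /join_supp [tXR tYS _ <-].
move: tXR tYS; rewrite !mem_finsupp => /HR [dX vX] /HS [dY vY].
split; first by rewrite domf_cat dX dY.
by move=> a v; rewrite fnd_cat; case: ifP => _; [apply: vY | apply: vX].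
Qed.

Lemma sum_join (P : pred tup) :
  \sum_(t <- finsupp J | P t) J t =
  \sum_(r <- finsupp R) \sum_(s <- finsupp S | (restr r Z == restr s Z) && P (catf r s))
     R r * S s * cfactor S Z (restr r Z).
Proof.
pose compat (p : tup * tup) := restr p.1 Z == restr p.2 Z.
pose glue (p : tup * tup) : tup := catf p.1 p.2.
pose pairs := [seq p <- [seq (r, s) | r <- finsupp R, s <- finsupp S] | compat p].
have pairsP p : p \in pairs ->
    [/\ p.1 \in finsupp R, p.2 \in finsupp S & restr p.1 Z = restr p.2 Z].
  by rewrite mem_filter => /andP[/eqP e /allpairsP [[r s] [rin sin /= pe]]]; subst p.
have uniq_pairs : uniq pairs.
  by rewrite filter_uniq // allpairs_uniq ?fset_uniq // => -[? ?] [? ?] _ _ [-> ->].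
have glue_inj : {in pairs &, injective glue}.
  move=> [r1 s1] [r2 s2] /pairsP [/= r1in s1in e1] /pairsP [/= r2in s2in e2].
  move=> e; have {}e : catf r1 s1 = catf r2 s2 := e.
  have [rX1 sY1] := restr_catf (domf_suppR r1in) (domf_suppS s1in) e1.
  have [rX2 sY2] := restr_catf (domf_suppR r2in) (domf_suppS s2in) e2.
  by congr pair; [rewrite -rX1 e rX2 | rewrite -sY1 e sY2].
have glue_onto : {subset finsupp J <= map glue pairs}.
  move=> t; rewrite mem_finsupp => /join_supp [tXR tYS e tE].
  have -> : t = glue (restr t X, restr t Y) := esym tE.
  apply: map_f; rewrite mem_filter; apply/andP; split; first exact/eqP.
  exact: allpairs_f.
rewrite (sum_finsupp_map P uniq_pairs glue_inj glue_onto) big_filter_cond big_mkcond.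
rewrite big_allpairs; apply: eq_big_seq => r rin; rewrite [RHS]big_mkcond.
apply: eq_big_seq => s sin; case: ifP => // /andP[/eqP e _].
exact: join_catf.
Qed.

End Join.

Section Consistency.
Variables (K : comNzSemiRingType) (HK : positive_semiring K) (Att V : choiceType).
Local Notation kr := (krel K Att V).
Variables (Dom : Att -> V -> Prop) (X Y : {fset Att}) (R S : kr).
Hypotheses (HR : is_krel Dom X R) (HS : is_krel Dom Y S).
Local Notation Z := (X `&` Y).

(* (a) -> (b): both marginals on Z are equivalent to the Z-marginal of a
   witness of consistency. *)
Lemma consistent_marginal_equiv :
  consistent Dom X Y R S -> krel_equiv (marginal R Z) (marginal S Z).
Proof.
case=> T [_ eRT eST].
have := krel_equiv_marginal HK Z eRT; rewrite (marginal_marginal HK _ (fsubsetIl X Y)) => eRTZ.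
have := krel_equiv_marginal HK Z eST; rewrite (marginal_marginal HK _ (fsubsetIr X Y)) => eSTZ.
exact: (krel_equiv_trans HK eRTZ (krel_equiv_sym eSTZ)).
Qed.

(* (b) -> (c), first half: equivalent marginals have the same support. *)
Lemma marginal_equiv_proj :
  krel_equiv (marginal R Z) (marginal S Z) ->
  proj (finsupp R) Z = proj (finsupp S) Z.
Proof. by rewrite -!(finsupp_marginal HK); apply: krel_equiv_finsupp. Qed.

(* (b) -> (c), second half: the two joins differ only in their correction
   factors c_S and c_R, which become equal after scaling by suitable powers
   of the constants relating the Z-marginals. *)
Lemma join_comm_equiv :
  krel_equiv (marginal R Z) (marginal S Z) ->
  krel_equiv (join X Y R S) (join Y X S R).
Proof.
move=> eqv; have sRS := krel_equiv_finsupp HK eqv.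
case: eqv => a [b [a0 b0 e]]; set n := (size (finsupp (marginal R Z))).-1.
exists (b ^+ n), (a ^+ n); split; try exact: pexpf_neq0.
move=> t; rewrite (joinE HR HS) (joinE HS HR) fsetUC [Y `&` X]fsetIC.
case: eqP => _; last by rewrite !mulr0.
have [RS0|RSn0] := eqVneq (R (restr t X) * S (restr t Y)) 0.
  by rewrite RS0 [S _ * R _]mulrC RS0 !mul0r !mulr0.
have tZ : restr t Z \in finsupp (marginal R Z).
  rewrite (finsupp_marginal HK); apply/imfsetP; exists (restr t X).
    by rewrite mem_finsupp; apply: contra RSn0 => /eqP->; rewrite mul0r.
  by rewrite restr_sub ?fsubsetIl.
have key := prod_scale_but_one (fset_uniq _) tZ e.
by rewrite /cfactor -sRS [S _ * R _]mulrC mulrCA [RHS]mulrCA key.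
Qed.

Lemma marginal_join w : marginal (join X Y R S) X w =
  R w * cfactor S Z (restr w Z) * marginal S Z (restr w Z).
Proof.
pose G r := R r * cfactor S Z (restr r Z) * marginal S Z (restr r Z).
have fiber_sum r : r \in finsupp R ->
    \sum_(s <- finsupp S | (restr r Z == restr s Z) && (restr (catf r s) X == w))
      R r * S s * cfactor S Z (restr r Z) = if r == w then G r else 0.
  move=> rin; case: (eqVneq r w) => [<-|rw].
    rewrite /G marginalE mulr_sumr big_mkcond [RHS]big_mkcond.
    apply: eq_big_seq => s sin.
    have [e|//] := eqVneq (restr r Z) (restr s Z).
    have [rX _] := restr_catf (domf_suppR HR rin) (domf_suppS HS sin) e.
    by rewrite rX eqxx mulrAC.
  apply: big1_seq => s /andP[/andP[/eqP e /eqP rXw] sin].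
  have [rX _] := restr_catf (domf_suppR HR rin) (domf_suppS HS sin) e.
  by rewrite -rX rXw eqxx in rw.
rewrite marginalE (sum_join HR HS) (eq_big_seq _ fiber_sum) -/(G w).
have [win|wR] := boolP (w \in finsupp R).
  rewrite (bigD1_seq w win (fset_uniq _)) eqxx big1_seq ?Monoid.mulm1 //.
  by move=> r /andP[/negPf-> _].
rewrite /G fsfun_dflt // !mul0r; apply: big1_seq => r /andP[_ rin].
by case: eqP => // rw; rewrite -rw rin in wR.
Qed.

(* When the supports agree on Z, c_S(w[Z]) * S[Z](w[Z]) is the product of all
   nonzero values of S[Z], for every w in the support of R. *)
Lemma marginal_join_equiv :
  proj (finsupp R) Z = proj (finsupp S) Z ->
  krel_equiv R (marginal (join X Y R S) X).
Proof.
move=> hp; exists (\prod_(v <- finsupp (marginal S Z)) marginal S Z v), 1; split.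
- by apply: pprod_neq0 => // v; rewrite mem_finsupp.
- exact: oner_neq0.
move=> w; rewrite mul1r marginal_join.
have [win|/fsfun_dflt->] := boolP (w \in finsupp R); last by rewrite mulr0 !mul0r.
have wZ : restr w Z \in finsupp (marginal S Z).
  by rewrite (finsupp_marginal HK) -hp; apply/imfsetP; exists w.
by rewrite (bigD1_seq _ wZ (fset_uniq _)) /cfactor mulrC mulrA mulrAC.
Qed.

End Consistency.

(* (c) -> (d): the X-marginal of R |><| S is equivalent to R; by symmetry the
   Y-marginal of S |><| R is equivalent to S, and commutation of the join up to
   equivalence transfers this to R |><| S. *)
Lemma join_marginals_equiv (K : comNzSemiRingType) (HK : positive_semiring K)
  (Att V : choiceType) (Dom : Att -> V -> Prop) (X Y : {fset Att})
  (R S : krel K Att V) (HR : is_krel Dom X R) (HS : is_krel Dom Y S) :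
  proj (finsupp R) (X `&` Y) = proj (finsupp S) (X `&` Y) ->
  krel_equiv (join X Y R S) (join Y X S R) ->
  krel_equiv R (marginal (join X Y R S) X) /\ krel_equiv S (marginal (join X Y R S) Y).
Proof.
move=> hp hcomm; split; first exact: (marginal_join_equiv HK HR HS hp).
have hp' : proj (finsupp S) (Y `&` X) = proj (finsupp R) (Y `&` X) by rewrite fsetIC.
apply: (krel_equiv_trans HK (marginal_join_equiv HK HS HR hp')).
exact: (krel_equiv_marginal HK Y (krel_equiv_sym hcomm)).
Qed.

Theorem lemma7 (K : comNzSemiRingType) (HK : positive_semiring K)
  (Att V : choiceType) (Dom : Att -> V -> Prop) (X Y : {fset Att})
  (R S : krel K Att V) (HR : is_krel Dom X R) (HS : is_krel Dom Y S) :
  [<-> consistent Dom X Y R S;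
       krel_equiv (marginal R (X `&` Y)) (marginal S (X `&` Y));
       proj (finsupp R) (X `&` Y) = proj (finsupp S) (X `&` Y) /\
         krel_equiv (join X Y R S) (join Y X S R);
       krel_equiv R (marginal (join X Y R S) X) /\
         krel_equiv S (marginal (join X Y R S) Y)].
Proof.
tfae.
- exact: consistent_marginal_equiv.
- move=> eqv; split; first exact: (marginal_equiv_proj HK eqv).
  exact: (join_comm_equiv HK HR HS eqv).
- by case=> hp hcomm; apply: (join_marginals_equiv HK HR HS hp hcomm).
- by case=> eR eS; exists (join X Y R S); split; first exact: (is_krel_join HR HS).
Qed.
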